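(* Let $\delta$ satisfy the Kalmanson conditions with respect to $\pi=(x_1,\dots,x_n)$, let $C_1,\dots,C_m$ ($m\ge3$) be a partition of $X$ into consecutive intervals of $\pi$ in this order, and let $\mu$ be a block weighting. Then for every $1\le i$ with $i+2\le m$, \[Q_\delta(C_i,C_{i+2})-Q_\delta(C_i,C_{i+1})\ge0.\]
   Context: $X=\{1,\dots,n\}$. A dissimilarity map is $\delta:X\times X\to\mathbb{R}$ with $\delta(i,j)=\delta(j,i)\ge0$, $\delta(i,i)=0$. A circular ordering is a listing $\pi=(x_1,\dots,x_n)$ of $X$ regarded cyclically. $\delta$ satisfies the Kalmanson conditions with respect to $\pi$ if for all $1\le i<j<k<l\le n$: $\delta(x_i,x_j)+\delta(x_k,x_l)\le\delta(x_i,x_k)+\delta(x_j,x_l)$ and $\delta(x_i,x_l)+\delta(x_j,x_k)\le\delta(x_i,x_k)+\delta(x_j,x_l)$. The partition into consecutive intervals means $C_1=\{x_1,\dots,x_{a_1}\}$, $C_2=\{x_{a_1+1},\dots,x_{a_2}\},\dots,C_m=\{x_{a_{m-1}+1},\dots,x_n\}$. A block weighting is $\mu:X\to\mathbb{R}_{\ge0}$ with $\sum_{x\in C_r}\mu(x)=1$ for every $r$. Set $\delta(C_r,C_s)=\sum_{x\in C_r,y\in C_s}\mu(x)\mu(y)\delta(x,y)$ and $Q_\delta(C_r,C_s)=(m-2)\delta(C_r,C_s)-\sum_{t\ne r}\delta(C_r,C_t)-\sum_{t\ne s}\delta(C_s,C_t)$. *)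

From HB Require Import structures.
From mathcomp Require Import all_boot all_order all_algebra.
From mathcomp Require Import fingroup perm.
Set Implicit Arguments. Unset Strict Implicit. Unset Printing Implicit Defensive.
Import Order.TTheory GRing.Theory Num.Theory.
Local Open Scope ring_scope.

(* X = {1..n} is represented by 'I_n.  A circular ordering pi = (x_1,...,x_n)
   is a permutation pi : {perm 'I_n}; x_{p+1} = pi p (positions 0-indexed). *)

Definition dissimilarity (R : realFieldType) (n : nat) (d : 'I_n -> 'I_n -> R) :=
  (forall x y, d x y = d y x) /\ (forall x y, 0 <= d x y) /\ (forall x, d x x = 0).

Definition kalmanson (R : realFieldType) (n : nat) (d : 'I_n -> 'I_n -> R)
  (pi : {perm 'I_n}) :=
  forall i j k l : 'I_n, (i < j)%N -> (j < k)%N -> (k < l)%N ->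
    d (pi i) (pi j) + d (pi k) (pi l) <= d (pi i) (pi k) + d (pi j) (pi l) /\
    d (pi i) (pi l) + d (pi j) (pi k) <= d (pi i) (pi k) + d (pi j) (pi l).

(* Consecutive intervals: breakpoints a 0 = 0 < a 1 < ... < a m = n,
   block C_r (1 <= r <= m) = {pi p | a (r-1) <= p < a r}. *)
Definition interval_partition (n m : nat) (a : nat -> nat) :=
  a 0%N = 0%N /\ a m = n /\ (forall r, (r < m)%N -> (a r < a r.+1)%N).

Definition inblock (n : nat) (pi : {perm 'I_n}) (a : nat -> nat) (r : nat)
  (x : 'I_n) : bool :=
  (a r.-1 <= (pi^-1)%g x)%N && ((pi^-1)%g x < a r)%N.

Definition block_weighting (R : realFieldType) (n m : nat) (pi : {perm 'I_n})
  (a : nat -> nat) (mu : 'I_n -> R) :=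
  (forall x, 0 <= mu x) /\
  (forall r, (1 <= r <= m)%N -> \sum_(x | inblock pi a r x) mu x = 1).

Definition blockdist (R : realFieldType) (n : nat) (d : 'I_n -> 'I_n -> R)
  (pi : {perm 'I_n}) (a : nat -> nat) (mu : 'I_n -> R) (r s : nat) : R :=
  \sum_(x | inblock pi a r x) \sum_(y | inblock pi a s y) mu x * mu y * d x y.

Definition Qdelta (R : realFieldType) (n m : nat) (d : 'I_n -> 'I_n -> R)
  (pi : {perm 'I_n}) (a : nat -> nat) (mu : 'I_n -> R) (r s : nat) : R :=
  (m - 2)%:R * blockdist d pi a mu r s
  - \sum_(1 <= t < m.+1 | t != r) blockdist d pi a mu r t
  - \sum_(1 <= t < m.+1 | t != s) blockdist d pi a mu s t.

From HB Require Import structures.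
From mathcomp Require Import all_boot all_order all_algebra.
From mathcomp Require Import fingroup perm.
From mathcomp Require Import zify ring lra.
Set Implicit Arguments. Unset Strict Implicit. Unset Printing Implicit Defensive.
Import Order.TTheory GRing.Theory Num.Theory.
Local Open Scope ring_scope.

(* The block distances are weighted averages of point distances, so the
   Kalmanson inequalities for points in four blocks C_p < C_q < C_r < C_s
   average to the same inequalities between block distances.  Expanding
   Q(C_i,C_{i+2}) - Q(C_i,C_{i+1}), the sums involving C_i cancel and what
   remains is a sum over the other blocks C_t of
     d(C_i,C_{i+2}) - d(C_i,C_{i+1}) + d(C_{i+1},C_t) - d(C_{i+2},C_t),
   which is nonnegative by the block Kalmanson inequality for (t,i,i+1,i+2)
   when t < i, for (i,i+1,i+2,t) when t > i+2, and vanishes for t = i. *)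

Section BlockMean.
Variables (R : realFieldType) (n m : nat) (pi : {perm 'I_n}) (a : nat -> nat).
Variable mu : 'I_n -> R.

Definition block_mean r (f : 'I_n -> R) : R :=
  \sum_(x | inblock pi a r x) mu x * f x.

Lemma eq_block_mean r f g : f =1 g -> block_mean r f = block_mean r g.
Proof. by move=> fg; apply: eq_bigr => x _; rewrite fg. Qed.

Lemma block_meanD r f g :
  block_mean r f + block_mean r g = block_mean r (fun x => f x + g x).
Proof. by rewrite /block_mean -big_split; apply: eq_bigr => x _; rewrite mulrDr. Qed.

Lemma blockdistE d r s :
  blockdist d pi a mu r s = block_mean r (fun x => block_mean s (d x)).
Proof.
rewrite /block_mean; apply: eq_bigr => x _; rewrite big_distrr /=.
by apply: eq_bigr => y _; rewrite mulrA.
Qed.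

Lemma blockdistC d r s : (forall x y, d x y = d y x) ->
  blockdist d pi a mu r s = blockdist d pi a mu s r.
Proof.
move=> dC; rewrite /blockdist exchange_big.
by apply: eq_bigr => y _; apply: eq_bigr => x _; rewrite (mulrC (mu x)) dC.
Qed.

Hypothesis mu_w : block_weighting m pi a mu.

Lemma block_mean_cst r c : (1 <= r <= m)%N -> block_mean r (fun _ => c) = c.
Proof. by move=> r_m; rewrite /block_mean -big_distrl /= (proj2 mu_w r r_m) mul1r. Qed.

Lemma ler_block_mean r f g : (forall x, inblock pi a r x -> f x <= g x) ->
  block_mean r f <= block_mean r g.
Proof.
by move=> fg; apply: ler_sum => x rx; rewrite ler_wpM2l ?fg ?(proj1 mu_w).
Qed.

End BlockMean.

Section BlockKalmanson.
Variables (R : realFieldType) (n m : nat) (d : 'I_n -> 'I_n -> R).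
Variables (pi : {perm 'I_n}) (a : nat -> nat) (mu : 'I_n -> R).
Hypothesis d_kal : kalmanson d pi.
Hypothesis a_part : interval_partition n m a.
Hypothesis mu_w : block_weighting m pi a mu.

Local Notation D := (blockdist d pi a mu).
Local Notation M := (block_mean pi a mu).

Lemma breakpoint_homo p q : (p <= q <= m)%N -> (a p <= a q)%N.
Proof.
move=> /andP[pq qm]; have [_ [_ a_lt]] := a_part.
have a_mono : {in [pred k | (k <= m)%N] &, {homo a : i j / (i <= j)%N}}.
  apply: homo_leq_in => //; first exact: leq_trans.
    by move=> i j _; rewrite !inE => jm k /andP[_ kj]; rewrite inE; lia.
  by move=> k _; rewrite inE => /a_lt /ltnW.
by apply: a_mono => //; rewrite inE; lia.
Qed.

Lemma inblock_pos_lt r s x y : (1 <= r)%N -> (r < s <= m)%N ->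
  inblock pi a r x -> inblock pi a s y -> ((pi^-1)%g x < (pi^-1)%g y)%N.
Proof.
move=> r1 /andP[rs sm] /andP[_ xr] /andP[ys _].
have rs' : (r <= s.-1 <= m)%N by lia.
by have := @breakpoint_homo r s.-1 rs'; lia.
Qed.

Lemma kalmanson_blocks p q r s x y z w :
  (1 <= p)%N -> (p < q)%N -> (q < r)%N -> (r < s <= m)%N ->
  inblock pi a p x -> inblock pi a q y -> inblock pi a r z -> inblock pi a s w ->
  d x y + d z w <= d x z + d y w /\ d x w + d y z <= d x z + d y w.
Proof.
move=> p1 pq qr /andP[rs sm] px qy rz sw.
have xy := inblock_pos_lt p1 _ px qy; have yz := inblock_pos_lt _ _ qy rz.
have zw := inblock_pos_lt _ _ rz sw.
have := d_kal (xy _) (yz _ _) (zw _ _); rewrite !permKV; apply; lia.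
Qed.

Lemma blockdist_kalmanson p q r s :
  (1 <= p)%N -> (p < q)%N -> (q < r)%N -> (r < s <= m)%N ->
  D p q + D r s <= D p r + D q s /\ D p s + D q r <= D p r + D q s.
Proof.
move=> p1 pq qr rs.
have mc := block_mean_cst mu_w.
pose M4 f := M p (fun x => M q (fun y => M r (fun z => M s (f x y z)))).
have M4D f g : M4 f + M4 g = M4 (fun x y z w => f x y z w + g x y z w).
  rewrite /M4 block_meanD; apply: eq_block_mean => x; rewrite block_meanD.
  by apply: eq_block_mean => y; rewrite block_meanD; apply: eq_block_mean => z;
    rewrite block_meanD.
have ler_M4 f g : (forall x y z w, inblock pi a p x -> inblock pi a q y ->
    inblock pi a r z -> inblock pi a s w -> f x y z w <= g x y z w) ->
    M4 f <= M4 g.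
  move=> fg; apply: (ler_block_mean mu_w) => x px.
  apply: (ler_block_mean mu_w) => y qy; apply: (ler_block_mean mu_w) => z rz.
  by apply: (ler_block_mean mu_w) => w sw; apply: fg.
have Dpq : D p q = M4 (fun x y _ _ => d x y).
  rewrite blockdistE; apply: eq_block_mean => x.
  by apply: eq_block_mean => y; rewrite !mc //; lia.
have Drs : D r s = M4 (fun _ _ z w => d z w).
  by rewrite blockdistE /M4 !mc //; lia.
have Dpr : D p r = M4 (fun x _ z _ => d x z).
  rewrite blockdistE; apply: eq_block_mean => x; rewrite mc; last by lia.
  by apply: eq_block_mean => z; rewrite mc //; lia.
have Dqs : D q s = M4 (fun _ y _ w => d y w).
  rewrite blockdistE /M4 mc; last by lia.
  by apply: eq_block_mean => y; rewrite mc //; lia.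
have Dps : D p s = M4 (fun x _ _ w => d x w).
  by rewrite blockdistE; apply: eq_block_mean => x; rewrite !mc //; lia.
have Dqr : D q r = M4 (fun _ y z _ => d y z).
  rewrite blockdistE /M4 mc; last by lia.
  by apply: eq_block_mean => y; apply: eq_block_mean => z; rewrite mc //; lia.
rewrite Dpq Drs Dpr Dqs Dps Dqr !M4D.
by split; apply: ler_M4 => x y z w px qy rz sw;
  case: (kalmanson_blocks p1 pq qr rs px qy rz sw).
Qed.

Hypothesis dC : forall x y, d x y = d y x.

Lemma blockdist_shift_gap_ge0 r t : (1 <= r)%N -> (r.+2 <= m)%N ->
  (1 <= t <= m)%N -> t != r.+1 -> t != r.+2 ->
  0 <= D r r.+2 - D r r.+1 + D r.+1 t - D r.+2 t.
Proof.
move=> r1 rm /andP[t1 tm] t_r1 t_r2.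
case: (ltngtP t r) => [tr | rt | ->].
- have r2m : (r.+1 < r.+2 <= m)%N by lia.
  have [_ kal] := blockdist_kalmanson t1 tr (ltnSn r) r2m.
  by rewrite [D r.+1 t]blockdistC // [D r.+2 t]blockdistC //; lra.
- have r2t : (r.+2 < t <= m)%N by lia.
  by have [kal _] := blockdist_kalmanson r1 (ltnSn r) (ltnSn r.+1) r2t; lra.
- by rewrite [D r.+1 r]blockdistC // [D r.+2 r]blockdistC //; lra.
Qed.

End BlockKalmanson.

Lemma big_nat_neq_split (V : nmodType) lo hi (F : nat -> V) s j :
  (lo <= j < hi)%N -> j != s ->
  \sum_(lo <= t < hi | t != s) F t =
    F j + \sum_(lo <= t < hi | (t != s) && (t != j)) F t.
Proof.
move=> j_in js; rewrite -big_filter (bigD1_seq j) /= ?big_filter_cond //.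
  by rewrite mem_filter js mem_index_iota.
by rewrite filter_uniq ?iota_uniq.
Qed.

Lemma Qdelta_shift_diff (R : realFieldType) n m (d : 'I_n -> 'I_n -> R) pi a mu r :
  (forall x y, d x y = d y x) -> (r.+2 <= m)%N ->
  let D := blockdist d pi a mu in
  Qdelta m d pi a mu r r.+2 - Qdelta m d pi a mu r r.+1 =
    \sum_(1 <= t < m.+1 | (t != r.+1) && (t != r.+2))
      (D r r.+2 - D r r.+1 + D r.+1 t - D r.+2 t).
Proof.
move=> dC rm D; pose P t := (t != r.+1) && (t != r.+2).
have r1_in : (1 <= r.+1 < m.+1)%N by lia.
have r2_in : (1 <= r.+2 < m.+1)%N by lia.
have split1 (F : nat -> R) :
    \sum_(1 <= t < m.+1 | t != r.+1) F t = F r.+2 + \sum_(1 <= t < m.+1 | P t) F t.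
  by rewrite (big_nat_neq_split _ r2_in) //; lia.
have split2 (F : nat -> R) :
    \sum_(1 <= t < m.+1 | t != r.+2) F t = F r.+1 + \sum_(1 <= t < m.+1 | P t) F t.
  rewrite (big_nat_neq_split _ r1_in); last by lia.
  by congr (_ + _); apply: eq_bigl => t; rewrite /P andbC.
have sumP_cst (c : R) : \sum_(1 <= t < m.+1 | P t) c = c * m%:R - c - c.
  have := sumr_const_nat m.+1 1 c.
  rewrite (bigD1_seq r.+1) ?iota_uniq ?mem_index_iota //= split1 subn1 mulr_natr.
  by move=> <-; ring.
rewrite /Qdelta -/D split1 split2 sumrB big_split sumP_cst /=.
rewrite [D r.+2 r.+1]blockdistC // natrB; last by lia.
rewrite /P -/D; ring.
Qed.

Theorem mainTheorem7 (R : realFieldType) (n m : nat) (d : 'I_n -> 'I_n -> R)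
  (pi : {perm 'I_n}) (a : nat -> nat) (mu : 'I_n -> R) :
  dissimilarity d -> kalmanson d pi ->
  (3 <= m)%N -> interval_partition n m a ->
  block_weighting m pi a mu ->
  forall i : nat, (1 <= i)%N -> (i + 2 <= m)%N ->
    0 <= Qdelta m d pi a mu i (i + 2) - Qdelta m d pi a mu i i.+1.
Proof.
move=> [dC _] d_kal _ a_part mu_w i i1; rewrite addn2 => im.
rewrite Qdelta_shift_diff // big_nat_cond.
apply: sumr_ge0 => t /andP[t_in /andP[t_r1 t_r2]].
exact: (blockdist_shift_gap_ge0 d_kal a_part mu_w dC).
Qed.
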